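(* Fix either an RSK growth diagram or a $d$-RSK growth diagram on a Young diagram $F$, and let $\alpha,\beta$ be partitions assigned to lattice points of the diagram. (i) If $\alpha$ is located weakly below and weakly to the left of $\beta$, then $\alpha\subseteq\beta$. (ii) If $\alpha,\beta$ are at the endpoints of a horizontal edge with $\alpha$ to the left of $\beta$, then $|\beta|-|\alpha|$ equals the sum of the entries in the column of cells below that edge; if they are at the endpoints of a vertical edge with $\alpha$ below $\beta$, then $|\beta|-|\alpha|$ equals the sum of the entries in the row of cells to the left of that edge. (iii) Reflecting all the data of the growth diagram (cells, entries, partitions) across the line $y=x$ gives a growth diagram of the same type (RSK or $d$-RSK) on the reflected Young diagram $F'$.
   Context: Partitions are finite weakly decreasing sequences of positive integers with $\lambda_i=0$ for $i>\ell(\lambda)$, $|\lambda|=\sum\lambda_i$; $d$-partitions have $\ell(\lambda)\le d$; $\alpha\subseteq\beta$ means $\alpha_i\le\beta_i$ for all $i$; $\alpha\prec\beta$ (also $\beta\succ\alpha$) means $\beta_1\ge\alpha_1\ge\beta_2\ge\alpha_2\ge\cdots$. Young diagrams lie in the first quadrant with unit cells at integer lattice points, left-justified, rows stacked upward from the $x$-axis; lattice points are cell corners, edges are cell sides; a filling assigns nonnegative integers to cells. A growth diagram on $F$ is a filling plus a partition at each lattice point, with $\emptyset$ at all lattice points on the coordinate axes, such that each cell satisfies a local rule. For a cell with entry $m$ and bottom-left, top-left, bottom-right, top-right corners $\kappa,\mu,\nu,\rho$: RSK local rule: $\mu\succ\kappa\prec\nu$, $\mu\prec\rho\succ\nu$,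 $\rho_1=m+\max(\mu_1,\nu_1)$, and $\rho_i+\kappa_{i-1}=\min(\mu_{i-1},\nu_{i-1})+\max(\mu_i,\nu_i)$ for all $i\ge2$. $d$-RSK local rule: all four are $d$-partitions, $\mu\succ\kappa\prec\nu$, $\mu\prec\rho\succ\nu$, $m=0$ or $\kappa_d=0$, $\rho_1+\kappa_d=m+\min(\mu_d,\nu_d)+\max(\mu_1,\nu_1)$, and $\rho_i+\kappa_{i-1}=\min(\mu_{i-1},\nu_{i-1})+\max(\mu_i,\nu_i)$ for $2\le i\le d$. An RSK (resp. $d$-RSK) growth diagram is one in which every cell satisfies the RSK (resp. $d$-RSK) local rule. *)

From mathcomp Require Import all_boot.
Set Implicit Arguments. Unset Strict Implicit. Unset Printing Implicit Defensive.

Definition is_partition (l : seq nat) : bool :=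
  sorted geq l && all (fun a => 0 < a) l.

(* 1-based parts: part l i = lambda_i, zero beyond the length (and part l 0 = 0,
   never used). *)
Definition part (l : seq nat) (i : nat) : nat :=
  if i is i'.+1 then nth 0 l i' else 0.

Definition size_part (l : seq nat) : nat := sumn l.

Definition is_dpartition (d : nat) (l : seq nat) : bool :=
  is_partition l && (size l <= d).

Definition subpart (a b : seq nat) : Prop := forall i, part a i <= part b i.

Definition interlace (a b : seq nat) : Prop :=
  forall i, 0 < i -> part a i <= part b i /\ part b i.+1 <= part a i.

(* RSK local rule for a cell with entry m and corners
   kappa (bottom-left), mu (top-left), nu (bottom-right), rho (top-right). *)
Definition rsk_rule (m : nat) (ka mu nu rho : seq nat) : Prop :=
  interlace ka mu /\ interlace ka nu /\ interlace mu rho /\ interlace nu rho /\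
  part rho 1 = m + maxn (part mu 1) (part nu 1) /\
  (forall i, 2 <= i ->
     part rho i + part ka i.-1
     = minn (part mu i.-1) (part nu i.-1) + maxn (part mu i) (part nu i)).

Definition drsk_rule (d : nat) (m : nat) (ka mu nu rho : seq nat) : Prop :=
  is_dpartition d ka /\ is_dpartition d mu /\ is_dpartition d nu /\
  is_dpartition d rho /\
  interlace ka mu /\ interlace ka nu /\ interlace mu rho /\ interlace nu rho /\
  (m == 0) || (part ka d == 0) /\
  part rho 1 + part ka d = m + minn (part mu d) (part nu d)
                           + maxn (part mu 1) (part nu 1) /\
  (forall i, 2 <= i <= d ->
     part rho i + part ka i.-1
     = minn (part mu i.-1) (part nu i.-1) + maxn (part mu i) (part nu i)).

Definition local_rule (k : option nat) : nat -> seq nat -> seq nat -> seq nat -> seq nat -> Prop :=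
  match k with None => rsk_rule | Some d => drsk_rule d end.

(* Young diagram of shape F (a partition): the cell with lower-left corner (i,j)
   (column i, row j, 0-based, rows stacked upward) belongs to F iff i < F_(j+1). *)
Definition cell (F : seq nat) (i j : nat) : bool := i < nth 0 F j.

Definition lattice_pt (F : seq nat) (x y : nat) : bool :=
  [|| cell F x y, (0 < x) && cell F x.-1 y, (0 < y) && cell F x y.-1
    | [&& 0 < x, 0 < y & cell F x.-1 y.-1]].

(* Horizontal edge from (x,y) to (x+1,y) is a side of a cell of F. *)
Definition hedge (F : seq nat) (x y : nat) : bool :=
  cell F x y || (0 < y) && cell F x y.-1.

(* Vertical edge from (x,y) to (x,y+1) is a side of a cell of F. *)
Definition vedge (F : seq nat) (x y : nat) : bool :=
  cell F x y || (0 < x) && cell F x.-1 y.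

Definition growth_diagram (k : option nat) (F : seq nat)
    (f : nat -> nat -> nat) (P : nat -> nat -> seq nat) : Prop :=
  (forall x y, lattice_pt F x y -> is_partition (P x y)) /\
  (forall x y, lattice_pt F x y -> (x == 0) || (y == 0) -> P x y = [::]) /\
  (forall i j, cell F i j ->
     local_rule k (f i j) (P i j) (P i j.+1) (P i.+1 j) (P i.+1 j.+1)).

(* Conjugate partition: the Young diagram reflected across y = x. *)
Definition conj_part (F : seq nat) : seq nat :=
  [seq count (fun r => i < r) F | i <- iota 0 (head 0 F)].

From mathcomp Require Import all_boot zify.

(* The local rules interlace the partitions along every edge of a
   cell, so partitions weakly grow along rows and columns, which gives (i).
   Summing the local identities over i telescopes, because min and max of
   mu_i, nu_i add up to mu_i + nu_i; this yields |rho| + |kappa| =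
   m + |mu| + |nu| for each cell, and adding these up a column of cells gives
   (ii). The local rules are symmetric in mu and nu, which gives (iii), and
   (iii) turns the column statements of (i) and (ii) into row statements about
   the conjugate diagram. *)

Set Implicit Arguments.
Unset Strict Implicit.
Unset Printing Implicit Defensive.

Lemma nth_sorted_geq F i j : sorted geq F -> i <= j -> nth 0 F j <= nth 0 F i.
Proof.
move=> sorted_F le_ij; have [lt_jF | ge_jF] := ltnP j (size F); last by rewrite nth_default.
apply: (sorted_leq_nth (rev_trans leq_trans) leqnn) => //.
by rewrite inE (leq_ltn_trans le_ij).
Qed.

Lemma count_gt_sorted F i j : sorted geq F ->
  (i < count (fun r => j < r) F) = (j < nth 0 F i).
Proof.
elim: F i => [|a s IHs] i sorted_as; first by rewrite nth_nil.
have [lt_ja | le_aj] := ltnP j a.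
  case: i => [|i] /=; rewrite lt_ja add1n ?ltnS //.
  exact: IHs (path_sorted sorted_as).
have s_le_a : all (geq a) s := order_path_min (rev_trans leq_trans) sorted_as.
have count_s : count (fun r => j < r) s = 0.
  by rewrite (eq_in_count (a2 := pred0)) ?count_pred0 // => r /(allP s_le_a) /=; lia.
have gt_ja : (j < a) = false by rewrite ltnNge le_aj.
case: i => [|i] /=; rewrite count_s gt_ja //.
by have := nth_sorted_geq sorted_as (leq0n i.+1); rewrite /=; lia.
Qed.

Lemma nth_conj_part F j : sorted geq F ->
  nth 0 (conj_part F) j = count (fun r => j < r) F.
Proof.
move=> sorted_F; rewrite /conj_part; have [lt_j | ge_j] := ltnP j (head 0 F).
  by rewrite (nth_map 0) ?size_iota // nth_iota.
rewrite nth_default ?size_map ?size_iota //.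
by apply/esym/eqP; rewrite eqn0Ngt count_gt_sorted // nth0 -leqNgt.
Qed.

Lemma sorted_conj_part F : sorted geq F -> sorted geq (conj_part F).
Proof.
move=> sorted_F; apply/(sortedP 0) => i _.
by rewrite /= !nth_conj_part //; apply: sub_count => r /ltnW.
Qed.

Lemma cell_conj_part F i j : sorted geq F -> cell (conj_part F) i j = cell F j i.
Proof. by move=> sorted_F; rewrite /cell nth_conj_part // count_gt_sorted. Qed.

Lemma lattice_pt_conj_part F x y : sorted geq F ->
  lattice_pt (conj_part F) x y = lattice_pt F y x.
Proof.
move=> sorted_F; rewrite /lattice_pt !cell_conj_part //.
by case: (cell F y x) (cell F y x.-1) (cell F y.-1 x) (cell F y.-1 x.-1) (0 < x) (0 < y)
  => [] [] [] [] [] [].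
Qed.

Lemma vedge_conj_part F x y : sorted geq F -> vedge F x y = hedge (conj_part F) y x.
Proof. by move=> sorted_F; rewrite /vedge /hedge !cell_conj_part. Qed.

Lemma lattice_ptE F x y : sorted geq F ->
  lattice_pt F x y = (x <= nth 0 F y.-1) && (0 < nth 0 F y.-1).
Proof.
move=> sorted_F; rewrite /lattice_pt /cell.
have := nth_sorted_geq sorted_F (leqnSn y.-1).
by case: y => [|y] /=; case: x => [|x] /=; lia.
Qed.

Lemma cell_lattice_pt F x y : sorted geq F -> cell F x y = lattice_pt F x.+1 y.+1.
Proof. by move=> sorted_F; rewrite lattice_ptE // /cell /=; lia. Qed.

Lemma lattice_pt_le F x y x' y' : sorted geq F ->
  lattice_pt F x y -> x' <= x -> y' <= y -> lattice_pt F x' y'.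
Proof.
move=> sorted_F; rewrite !lattice_ptE // => /andP[le_x pos_y] le_x' le_y'.
have le_rows : y'.-1 <= y.-1 by lia.
by have := nth_sorted_geq sorted_F le_rows; lia.
Qed.

Lemma hedge_lattice_pt F x y : hedge F x y -> lattice_pt F x.+1 y.
Proof.
by case/orP=> [c | /andP[pos_y c]]; rewrite /lattice_pt /= c ?pos_y ?orbT.
Qed.

Lemma subpart_trans b a c : subpart a b -> subpart b c -> subpart a c.
Proof. by move=> ab bc i; exact: leq_trans (ab i) (bc i). Qed.

Lemma interlace_subpart a b : interlace a b -> subpart a b.
Proof. by move=> ab [|i] //; case: (ab i.+1). Qed.

Lemma local_rule_interlace k m ka mu nu rho :
  local_rule k m ka mu nu rho -> interlace mu rho.
Proof. by case: k => [d|] /=; [case=> _ [_ [_ [_ [_ [_ [? _]]]]]] | case=> _ [_ [? _]]]. Qed.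

Lemma local_rule_sym k m ka mu nu rho :
  local_rule k m ka mu nu rho -> local_rule k m ka nu mu rho.
Proof.
case: k => [d|] /=.
  case=> ? [? [? [? [? [? [? [? [? [rho1 rhoi]]]]]]]]].
  do 9 (split; first done); split; first by rewrite minnC maxnC.
  by move=> i le_i; rewrite minnC maxnC; apply: rhoi.
case=> ? [? [? [? [rho1 rhoi]]]].
do 4 (split; first done); split; first by rewrite maxnC.
by move=> i le_i; rewrite minnC maxnC; apply: rhoi.
Qed.

Lemma part_default l i : size l < i -> part l i = 0.
Proof. by case: i => //= i lt_li; rewrite nth_default. Qed.

Lemma sumn_part l N : size l <= N -> sumn l = \sum_(1 <= i < N.+1) part l i.
Proof.
elim: l N => [|a l IHl] N le_lN; first by rewrite big1 // => -[|i] _ /=; rewrite ?nth_nil.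
case: N le_lN => [//|N] /= le_lN.
rewrite big_nat_recl // (IHl N le_lN); congr (_ + _).
by apply: eq_big_nat => -[|i].
Qed.

Lemma local_identities_sum (N m : nat) (r a u v : nat -> nat) : 0 < N ->
  r 1 + a N = m + minn (u N) (v N) + maxn (u 1) (v 1) ->
  (forall i, 2 <= i <= N ->
     r i + a i.-1 = minn (u i.-1) (v i.-1) + maxn (u i) (v i)) ->
  \sum_(1 <= i < N.+1) r i + \sum_(1 <= i < N.+1) a i
  = m + \sum_(1 <= i < N.+1) u i + \sum_(1 <= i < N.+1) v i.
Proof.
case: N => [//|n] _ r1 ri.
have inner : \sum_(1 <= i < n.+1) (r i.+1 + a i)
           = \sum_(1 <= i < n.+1) (minn (u i) (v i) + maxn (u i.+1) (v i.+1)).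
  by apply: eq_big_nat => i /andP[pos_i lt_in]; apply: ri; lia.
have uv : \sum_(1 <= i < n.+2) u i + \sum_(1 <= i < n.+2) v i
        = \sum_(1 <= i < n.+2) minn (u i) (v i) + \sum_(1 <= i < n.+2) maxn (u i) (v i).
  by rewrite -!big_split; apply: eq_bigr => i _; exact/esym/addn_min_max.
move: inner uv; rewrite !big_split /=.
rewrite [\sum_(1 <= i < n.+2) r i]big_nat_recl // [\sum_(1 <= i < n.+2) a i]big_nat_recr //.
rewrite [\sum_(1 <= i < n.+2) minn _ _]big_nat_recr // [\sum_(1 <= i < n.+2) maxn _ _]big_nat_recl //=.
lia.
Qed.

Lemma rsk_rule_size m ka mu nu rho : rsk_rule m ka mu nu rho ->
  sumn rho + sumn ka = m + sumn mu + sumn nu.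
Proof.
case=> _ [_ [_ [_ [rho1 rhoi]]]].
set N := (size ka + size mu + size nu + size rho).+1.
rewrite !(@sumn_part _ N) ?/N; try lia.
apply: local_identities_sum => [//| |i /andP[two_le_i _]]; last exact: rhoi.
by rewrite [part ka N]part_default ?[part mu N]part_default ?[part nu N]part_default ?/N; lia.
Qed.

Lemma drsk_rule_size d m ka mu nu rho : drsk_rule d m ka mu nu rho ->
  sumn rho + sumn ka = m + sumn mu + sumn nu.
Proof.
case=> /andP[_ ka_d] [/andP[_ mu_d] [/andP[_ nu_d] [/andP[_ rho_d]]]].
case=> _ [_ [_ [_ [_ [rho1 rhoi]]]]].
case: d ka_d mu_d nu_d rho_d rho1 rhoi => [|d] ka_d mu_d nu_d rho_d rho1 rhoi.
  (* For d = 0 all four partitions are empty and the first identity forces m = 0. *)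
  move: ka_d mu_d nu_d rho_d rho1; rewrite !leqn0 !size_eq0.
  by move=> /eqP-> /eqP-> /eqP-> /eqP-> /= ->.
rewrite !(@sumn_part _ d.+1) //; exact: local_identities_sum.
Qed.

Lemma local_rule_size k m ka mu nu rho : local_rule k m ka mu nu rho ->
  sumn rho + sumn ka = m + sumn mu + sumn nu.
Proof. by case: k => [d|] /=; [exact: drsk_rule_size | exact: rsk_rule_size]. Qed.

Lemma growth_diagram_conj k F f P : sorted geq F -> growth_diagram k F f P ->
  growth_diagram k (conj_part F) (fun i j => f j i) (fun x y => P y x).
Proof.
move=> sorted_F [P_part [P_axis P_rule]]; split; [|split].
- by move=> x y; rewrite lattice_pt_conj_part //; apply: P_part.
- by move=> x y; rewrite lattice_pt_conj_part // orbC; apply: P_axis.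
- by move=> i j; rewrite cell_conj_part // => /P_rule /local_rule_sym.
Qed.

Section GrowthDiagramRows.

Variables (k : option nat) (F : seq nat) (f : nat -> nat -> nat) (P : nat -> nat -> seq nat).
Hypotheses (sorted_F : sorted geq F) (growth_P : growth_diagram k F f P).

Lemma growth_bottom_nil x' x y : lattice_pt F x y -> x' <= x -> P x' 0 = [::].
Proof.
have [_ [P_axis _]] := growth_P.
by move=> lat le_x; apply: P_axis; [exact: lattice_pt_le lat le_x (leq0n y) | rewrite orbT].
Qed.

Lemma growth_subpart_succ x y : lattice_pt F x.+1 y -> subpart (P x y) (P x.+1 y).
Proof.
have [_ [_ P_rule]] := growth_P.
case: y => [|y] lat.
  by rewrite (growth_bottom_nil lat (leqnSn x)) (growth_bottom_nil lat (leqnn _)).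
rewrite -cell_lattice_pt // in lat.
exact: interlace_subpart (local_rule_interlace (P_rule _ _ lat)).
Qed.

Lemma growth_subpart_row x1 x2 y : lattice_pt F x2 y -> x1 <= x2 ->
  subpart (P x1 y) (P x2 y).
Proof.
elim: x2 => [|x2 IHx] lat; first by rewrite leqn0 => /eqP-> i.
rewrite leq_eqVlt ltnS => /orP[/eqP-> i // | le_x1x2].
have lat' := lattice_pt_le sorted_F lat (leqnSn x2) (leqnn y).
exact: subpart_trans (IHx lat' le_x1x2) (growth_subpart_succ lat).
Qed.

Lemma growth_size_row x y : lattice_pt F x.+1 y ->
  size_part (P x.+1 y) = size_part (P x y) + \sum_(j < y) f x j.
Proof.
have [_ [_ P_rule]] := growth_P.
elim: y => [|y IHy] lat.
  by rewrite big_ord0 (growth_bottom_nil lat (leqnSn x)) (growth_bottom_nil lat (leqnn _)).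
have lat' := lattice_pt_le sorted_F lat (leqnn _) (leqnSn y).
have cell_xy : cell F x y by rewrite cell_lattice_pt.
have := local_rule_size (P_rule _ _ cell_xy); have := IHy lat'.
rewrite big_ord_recr /size_part /=; lia.
Qed.

End GrowthDiagramRows.

Theorem proposition3p1 (k : option nat) (F : seq nat)
    (f : nat -> nat -> nat) (P : nat -> nat -> seq nat) :
  (forall d, k = Some d -> 0 < d) ->
  is_partition F ->
  growth_diagram k F f P ->
  (* (i) *)
  (forall x1 y1 x2 y2, lattice_pt F x1 y1 -> lattice_pt F x2 y2 ->
     x1 <= x2 -> y1 <= y2 -> subpart (P x1 y1) (P x2 y2)) /\
  (* (ii) horizontal edges *)
  (forall x y, hedge F x y ->
     size_part (P x.+1 y) = size_part (P x y) + \sum_(j < y) f x j) /\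
  (* (ii) vertical edges *)
  (forall x y, vedge F x y ->
     size_part (P x y.+1) = size_part (P x y) + \sum_(i < x) f i y) /\
  (* (iii) *)
  growth_diagram k (conj_part F) (fun i j => f j i) (fun x y => P y x).
Proof.
move=> _ /andP[sorted_F _] growth_P.
have sorted_Fc := sorted_conj_part sorted_F.
have growth_Pc := growth_diagram_conj sorted_F growth_P.
split; [|split; [|split]] => //.
- move=> x1 y1 x2 y2 _ lat2 le_x le_y.
  have lat21 := lattice_pt_le sorted_F lat2 (leqnn x2) le_y.
  apply: subpart_trans (growth_subpart_row sorted_F growth_P lat21 le_x) _.
  by apply: (growth_subpart_row sorted_Fc growth_Pc) le_y; rewrite lattice_pt_conj_part.
- by move=> x y /hedge_lattice_pt lat; exact: (growth_size_row sorted_F growth_P lat).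
- move=> x y; rewrite vedge_conj_part // => /hedge_lattice_pt lat.
  exact: (growth_size_row sorted_Fc growth_Pc lat).
Qed.
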